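(* Let $\theta\in\mathbb{R}$ with $\tan\theta\in\mathbb{R}\setminus\mathbb{Q}$, let $\epsilon>0$, and let $\Lambda=\Lambda_F\times\mathbb{Z}\subset\mathbb{R}^2$ be as defined in the context. Let $w=(1,s)\in\mathbb{R}^2$ with $s\neq 0$, and put $\Lambda+w\mathbb{R}=\{p+tw:\ p\in\Lambda,\ t\in\mathbb{R}\}$. (i) If $s\in\mathbb{Q}\cos\theta+\mathbb{Q}\sin\theta$, then either $\Lambda+w\mathbb{R}$ is a dense subset of $\mathbb{R}^2$, or each connected component of the closure of $\Lambda+w\mathbb{R}$ is homeomorphic to $[0,1]\times\mathbb{R}$. (ii) If $s\notin\mathbb{Q}\cos\theta+\mathbb{Q}\sin\theta$, then $\Lambda+w\mathbb{R}$ is a dense subset of $\mathbb{R}^2$.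
   Context: Fix $\theta$ with $\tan\theta$ irrational and a window length $\epsilon>0$. Define $\Lambda_F=\{m\cos\theta-n\sin\theta:\ m,n\in\mathbb{Z},\ 0\le m\sin\theta+n\cos\theta<\epsilon\}\subset\mathbb{R}$ and $\Lambda=\Lambda_F\times\mathbb{Z}\subset\mathbb{R}^2$. Equivalently, $\Lambda$ is the cut-and-project set obtained from the lattice $D=\{(m\cos\theta-n\sin\theta,\ k,\ m\sin\theta+n\cos\theta):\ m,n,k\in\mathbb{Z}\}\subset\mathbb{R}^2\times\mathbb{R}$ and window $[0,\epsilon)$: $\Lambda$ consists of the projections to $\mathbb{R}^2$ of lattice points whose last coordinate lies in $[0,\epsilon)$. *)

From Stdlib Require Import Reals QArith Qreals ZArith.
Open Scope R_scope.

Definition pt := (R * R)%type.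

Definition dist2 (p q : pt) : R :=
  sqrt ((fst p - fst q) ^ 2 + (snd p - snd q) ^ 2).

Definition open2 (U : pt -> Prop) : Prop :=
  forall x, U x -> exists d, 0 < d /\ forall y, dist2 x y < d -> U y.

Definition closure2 (A : pt -> Prop) (x : pt) : Prop :=
  forall e, 0 < e -> exists y, A y /\ dist2 x y < e.

Definition dense2 (A : pt -> Prop) : Prop := forall x, closure2 A x.

Definition connected2 (A : pt -> Prop) : Prop :=
  forall U V, open2 U -> open2 V ->
    (forall x, A x -> U x \/ V x) ->
    (forall x, ~ (A x /\ U x /\ V x)) ->
    (forall x, A x -> U x) \/ (forall x, A x -> V x).

Definition component2 (C : pt -> Prop) (x : pt) : pt -> Prop :=
  fun y => exists K, connected2 K /\ (forall z, K z -> C z) /\ K x /\ K y.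

Definition cont_on (A : pt -> Prop) (f : pt -> pt) : Prop :=
  forall p, A p -> forall e, 0 < e -> exists d, 0 < d /\
    forall q, A q -> dist2 p q < d -> dist2 (f p) (f q) < e.

Definition homeomorphic2 (A B : pt -> Prop) : Prop :=
  exists f g : pt -> pt,
    (forall p, A p -> B (f p)) /\ (forall q, B q -> A (g q)) /\
    (forall p, A p -> g (f p) = p) /\ (forall q, B q -> f (g q) = q) /\
    cont_on A f /\ cont_on B g.

Definition strip : pt -> Prop := fun p => 0 <= fst p <= 1.

Definition Lambda (theta eps : R) (p : pt) : Prop :=
  exists m n k : Z,
    0 <= IZR m * sin theta + IZR n * cos theta < eps /\
    p = (IZR m * cos theta - IZR n * sin theta, IZR k).

Definition LambdaLine (theta eps s : R) (p : pt) : Prop :=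
  exists q t, Lambda theta eps q /\ p = (fst q + t, snd q + t * s).

Definition in_Qspan (theta s : R) : Prop :=
  exists a b : Q, s = Q2R a * cos theta + Q2R b * sin theta.

From Stdlib Require Import Reals QArith Qreals ZArith Lra Lia Classical.
Open Scope R_scope.

(* A point p lies on Lambda + wR iff the line through p with direction w = (1, s) meets the
   x-axis at a "cut" x - k/s with x in Lambda_F and k in Z; since this cut depends Lipschitz
   on p, closures and density of Lambda + wR reduce to those of the set of cuts in R.

   If s is not in Q cos theta + Q sin theta, then 1, cos theta / s, sin theta / s are linearly
   independent over Q, and Kronecker's theorem lets the lattice point (m, n) and k be chosen
   with the cut anywhere and the internal coordinate near eps/2: the cuts are dense.

   If q s = p1 cos theta + p2 sin theta, then for a lattice point with internal coordinate y,
   q s * cut + (p1 sin theta - p2 cos theta) * y is an integer multiple of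
   g = gcd(p1, p2, q), and every multiple occurs. So the closure of the cuts is the union of
   the segments u i + kap [0, eps], i in Z. Either these overlap and cover R, or they are
   separated by a positive gap, and then each component of the closure of Lambda + wR is an
   affine image of the strip [0, 1] x R. *)

(** * Approximation by integer combinations *)

Lemma floor_mult x r : 0 < x -> exists t : Z, IZR t * x <= r < IZR t * x + x.
Proof.
  intro Hx. exists (Int_part (r / x)).
  destruct (base_Int_part (r / x)) as [Hlo Hhi].
  assert (Er : r = r / x * x) by (field; lra).
  set (y := r / x) in *. rewrite Er. split; nra.
Qed.

Lemma Rabs_comb_le a b x y : Rabs x <= 1 -> Rabs y <= 1 -> Rabs (a * x + b * y) <= Rabs a + Rabs b.
Proof.
  intros Hx Hy. eapply Rle_trans; [apply Rabs_triang|]. rewrite !Rabs_mult.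
  pose proof (Rabs_pos a). pose proof (Rabs_pos b). pose proof (Rabs_pos x). pose proof (Rabs_pos y).
  nra.
Qed.

Lemma interval_closed a b y :
  (forall d, 0 < d -> exists y', a <= y' <= b /\ Rabs (y - y') < d) -> a <= y <= b.
Proof.
  intros H. split; apply Rnot_lt_le; intro Hy.
  - destruct (H (a - y)) as [y' [Hy' Hd]]; [lra|]. apply Rabs_def2 in Hd. lra.
  - destruct (H (y - b)) as [y' [Hy' Hd]]; [lra|]. apply Rabs_def2 in Hd. lra.
Qed.

Lemma dense_meets_window (S : R -> Prop) eps y d :
  (forall t e, 0 < e -> exists Y, S Y /\ Rabs (Y - t) < e) -> 0 < eps -> 0 <= y <= eps -> 0 < d ->
  exists Y, S Y /\ 0 <= Y < eps /\ Rabs (Y - y) < d.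
Proof.
  intros HS Heps Hy Hd. set (d' := Rmin d eps / 4).
  assert (Hd' : 0 < d' /\ 2 * d' < d /\ 2 * d' <= eps / 2).
  { unfold d'. pose proof (Rmin_l d eps). pose proof (Rmin_r d eps).
    pose proof (Rmin_glb_lt d eps 0 Hd Heps). lra. }
  destruct (Rlt_le_dec y (eps / 2)) as [Hlow|Hhigh].
  - destruct (HS (y + d') d' (proj1 Hd')) as [Y [SY HY]]. apply Rabs_def2 in HY.
    exists Y. split; [exact SY|]. split; [lra | apply Rabs_def1; lra].
  - destruct (HS (y - d') d' (proj1 Hd')) as [Y [SY HY]]. apply Rabs_def2 in HY.
    exists Y. split; [exact SY|]. split; [lra | apply Rabs_def1; lra].
Qed.

Lemma pigeonhole M (f : nat -> nat) : (forall i, (i <= M)%nat -> (f i < M)%nat) ->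
  exists i j, (i < j <= M)%nat /\ f i = f j.
Proof.
  revert f; induction M as [|M IH]; intros f Hf.
  - specialize (Hf 0%nat (le_n 0)). lia.
  - destruct (classic (exists i, (i <= M)%nat /\ f i = f (S M))) as [[i [Hi Hfi]]|Hno].
    + exists i, (S M). split; [lia | exact Hfi].
    + (* redirect the value M to f (S M), which no earlier index takes *)
      set (f' := fun i => if Nat.eqb (f i) M then f (S M) else f i).
      assert (Hne : forall i, (i <= M)%nat -> f i <> f (S M)) by (intros i Hi E; apply Hno; eauto).
      destruct (IH f') as [i [j [Hij Heq]]].
      { intros i Hi. unfold f'. pose proof (Hf (S M) (le_n _)). pose proof (Hf i ltac:(lia)).
        pose proof (Hne i Hi). destruct (Nat.eqb_spec (f i) M); lia. }
      exists i, j. split; [lia|]. unfold f' in Heq.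
      pose proof (Hne i ltac:(lia)). pose proof (Hne j ltac:(lia)).
      destruct (Nat.eqb_spec (f i) M), (Nat.eqb_spec (f j) M); lia.
Qed.

Lemma Int_part_scale_range (N : Z) x : (0 < N)%Z -> 0 <= x < 1 ->
  (0 <= Int_part (IZR N * x) < N)%Z.
Proof.
  intros HN Hx. apply IZR_lt in HN. destruct (base_Int_part (IZR N * x)) as [Hlo Hhi].
  split.
  - apply Z.lt_succ_r, lt_IZR. rewrite succ_IZR. nra.
  - apply lt_IZR. nra.
Qed.

Lemma Int_part_scale_close (N : Z) x y : (0 < N)%Z ->
  Int_part (IZR N * x) = Int_part (IZR N * y) -> Rabs (x - y) * IZR N < 1.
Proof.
  intros HN E. apply IZR_lt in HN.
  destruct (base_Int_part (IZR N * x)), (base_Int_part (IZR N * y)).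
  rewrite E in *. rewrite Rmult_comm, <- (Rabs_pos_eq (IZR N)) at 1 by lra.
  rewrite <- Rabs_mult. apply Rabs_def1; lra.
Qed.

(* Dirichlet: pigeonhole on the N^2 cells of [0,1)^2 holding the fractional parts of (i b1, i b2). *)
Lemma dirichlet2 b1 b2 rho : 0 < rho -> exists k m n : Z, k <> 0%Z /\
  Rabs (IZR k * b1 - IZR m) < rho /\ Rabs (IZR k * b2 - IZR n) < rho.
Proof.
  intros Hrho.
  destruct (archimed (/ rho)) as [HN _]. set (N := up (/ rho)) in *.
  assert (Hir : 0 < / rho) by (apply Rinv_0_lt_compat; exact Hrho).
  assert (HN0 : (0 < N)%Z) by (apply lt_IZR; lra).
  assert (Hsmall : forall x, x * IZR N < 1 -> x < rho).
  { intros x Hx. destruct (Rle_lt_dec x 0) as [Hx0|Hx0]; [lra|].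
    assert (Hxr : x * / rho < 1) by nra.
    apply Rmult_lt_compat_r with (r := rho) in Hxr; [|exact Hrho].
    replace (x * / rho * rho) with x in Hxr by (field; lra). lra. }
  set (cell := fun (i : nat) b => Int_part (IZR N * frac_part (INR i * b))).
  assert (Hcell : forall i b, (0 <= cell i b < N)%Z).
  { intros i b. apply Int_part_scale_range; [exact HN0|]. destruct (base_fp (INR i * b)). lra. }
  destruct (pigeonhole (Z.to_nat (N * N)) (fun i => Z.to_nat (cell i b1 * N + cell i b2)))
    as [i [j [Hij Heq]]].
  { intros i _. pose proof (Hcell i b1). pose proof (Hcell i b2). nia. }
  pose proof (Hcell i b1). pose proof (Hcell i b2). pose proof (Hcell j b1). pose proof (Hcell j b2).
  assert (E1 : cell j b1 = cell i b1) by nia. assert (E2 : cell j b2 = cell i b2) by nia.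
  apply Int_part_scale_close, Hsmall in E1, E2; try exact HN0.
  exists (Z.of_nat j - Z.of_nat i)%Z, (Int_part (INR j * b1) - Int_part (INR i * b1))%Z,
         (Int_part (INR j * b2) - Int_part (INR i * b2))%Z.
  split; [lia|]. unfold frac_part in E1, E2. rewrite !minus_IZR, <- !INR_IZR_INZ.
  split; [replace ((INR j - INR i) * b1 - _) with (INR j * b1 - IZR (Int_part (INR j * b1))
             - (INR i * b1 - IZR (Int_part (INR i * b1)))) by ring
         | replace ((INR j - INR i) * b2 - _) with (INR j * b2 - IZR (Int_part (INR j * b2))
             - (INR i * b2 - IZR (Int_part (INR i * b2)))) by ring]; assumption.
Qed.

Definition Z_indep (a b : R) : Prop :=
  forall p q : Z, IZR p * a + IZR q * b = 0 -> p = 0%Z /\ q = 0%Z.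

Section ZSpan.
Variables a b : R.
Hypothesis Hab : Z_indep a b.

Lemma Z_indep_neq0_l : a <> 0.
Proof. intro E. destruct (Hab 1%Z 0%Z) as [H _]; [rewrite E; ring | discriminate]. Qed.

Lemma Z_span_small e : 0 < e -> exists p q : Z, 0 < IZR p * a + IZR q * b < e.
Proof.
  intro He. pose proof Z_indep_neq0_l as Ha.
  assert (Ha' : 0 < Rabs a) by (apply Rabs_pos_lt; exact Ha).
  destruct (dirichlet2 (b / a) 0 (e / Rabs a)) as [k [m [_ [Hk [Hkm _]]]]].
  { apply Rdiv_lt_0_compat; assumption. }
  set (x := IZR (- m) * a + IZR k * b).
  assert (Hx : Rabs x < e).
  { replace x with (a * (IZR k * (b / a) - IZR m)) by (unfold x; rewrite opp_IZR; field; exact Ha).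
    rewrite Rabs_mult. apply Rmult_lt_compat_l with (r := Rabs a) in Hkm; [|exact Ha'].
    replace (Rabs a * (e / Rabs a)) with e in Hkm by (field; lra). exact Hkm. }
  assert (Hx0 : x <> 0) by (intro E; destruct (Hab _ _ E); contradiction).
  destruct (Rlt_le_dec 0 x) as [Hpos|Hneg].
  - exists (- m)%Z, k. fold x. apply Rabs_def2 in Hx. lra.
  - exists m, (- k)%Z. apply Rabs_def2 in Hx.
    replace (IZR m * a + IZR (- k) * b) with (- x) by (unfold x; rewrite !opp_IZR; ring). lra.
Qed.

Lemma Z_span_dense r e : 0 < e -> exists p q : Z, Rabs (IZR p * a + IZR q * b - r) < e.
Proof.
  intro He. destruct (Z_span_small e He) as [p [q [Hx0 Hxe]]].
  destruct (floor_mult (IZR p * a + IZR q * b) r Hx0) as [t Ht].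
  exists (t * p)%Z, (t * q)%Z. rewrite !mult_IZR.
  replace (IZR t * IZR p * a + IZR t * IZR q * b) with (IZR t * (IZR p * a + IZR q * b)) by ring.
  apply Rabs_def1; lra.
Qed.

End ZSpan.

(* Kronecker's theorem in dimension two: if 1, b1, b2 are linearly independent over Q, the
   points (m - k b1, n - k b2) are dense in R^2. A Dirichlet approximation (g1, g2) of the
   origin spans lines whose integer translates are dense; we move along one such line. *)
Lemma kronecker2 b1 b2 :
  (forall c0 c1 c2 : Z, IZR c0 + IZR c1 * b1 + IZR c2 * b2 = 0 ->
     c0 = 0%Z /\ c1 = 0%Z /\ c2 = 0%Z) ->
  forall z1 z2 eta, 0 < eta -> exists m n k : Z,
    Rabs (IZR m - IZR k * b1 - z1) < eta /\ Rabs (IZR n - IZR k * b2 - z2) < eta.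
Proof.
  intros Hind z1 z2 eta Heta. set (rho := eta / 2).
  destruct (dirichlet2 b1 b2 rho ltac:(unfold rho; lra)) as [k0 [m0 [n0 [Hk0 [H1 H2]]]]].
  set (g1 := IZR m0 - IZR k0 * b1). set (g2 := IZR n0 - IZR k0 * b2).
  assert (Hg1 : Rabs g1 < rho) by (unfold g1; rewrite Rabs_minus_sym; exact H1).
  assert (Hg2 : Rabs g2 < rho) by (unfold g2; rewrite Rabs_minus_sym; exact H2).
  assert (Hg : Z_indep g2 (- g1)).
  { intros p q E. destruct (Hind (p * n0 - q * m0)%Z (q * k0)%Z (- (p * k0))%Z) as [_ [Hq Hp]].
    { rewrite minus_IZR, opp_IZR, !mult_IZR. unfold g1, g2 in E. lra. }
    split; nia. }
  assert (Hg1_0 : 0 < Rabs g1).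
  { apply Rabs_pos_lt. intro E. destruct (Hg 0%Z 1%Z) as [_ H]; [rewrite E; ring | discriminate]. }
  destruct (Z_span_dense _ _ Hg (g2 * z1 - g1 * z2) (rho * Rabs g1)) as [a [b Hab]].
  { apply Rmult_lt_0_compat; [unfold rho; lra | exact Hg1_0]. }
  (* the line through (a, b) with direction (g1, g2) passes vertically within rho of (z1, z2) *)
  set (cross := g2 * (z1 - IZR a) - g1 * (z2 - IZR b)).
  assert (Hcross : Rabs cross < rho * Rabs g1).
  { unfold cross. rewrite <- Rabs_Ropp.
    replace (- _) with (IZR a * g2 + IZR b * - g1 - (g2 * z1 - g1 * z2)) by ring. exact Hab. }
  assert (Hg1' : g1 <> 0) by (intro E; rewrite E, Rabs_R0 in Hg1_0; lra).
  set (j := Int_part ((z1 - IZR a) / g1)).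
  set (D := IZR j - (z1 - IZR a) / g1).
  assert (HD : Rabs D < 1).
  { unfold D, j. destruct (base_Int_part ((z1 - IZR a) / g1)). apply Rabs_def1; lra. }
  exists (a + j * m0)%Z, (b + j * n0)%Z, (j * k0)%Z. rewrite !plus_IZR, !mult_IZR.
  replace (IZR a + IZR j * IZR m0 - IZR j * IZR k0 * b1 - z1) with (D * g1)
    by (unfold D, g1; field; exact Hg1').
  replace (IZR b + IZR j * IZR n0 - IZR j * IZR k0 * b2 - z2) with (D * g2 + cross / g1)
    by (unfold D, cross, g1, g2 in *; field; exact Hg1').
  assert (Hdiv : Rabs (cross / g1) < rho).
  { unfold Rdiv. rewrite Rabs_mult, Rabs_inv.
    apply Rmult_lt_reg_r with (Rabs g1); [exact Hg1_0|].
    rewrite Rmult_assoc, Rinv_l by lra. lra. }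
  pose proof (Rabs_pos D). pose proof (Rabs_pos g2).
  split.
  - rewrite Rabs_mult. unfold rho in *. nra.
  - eapply Rle_lt_trans; [apply Rabs_triang|]. rewrite Rabs_mult. unfold rho in *. nra.
Qed.

(** * Lipschitz maps and connectedness in the plane *)

Lemma Rabs_fst_le_dist2 p q : Rabs (fst p - fst q) <= dist2 p q.
Proof.
  unfold dist2. rewrite <- sqrt_Rsqr_abs. apply sqrt_le_1_alt. unfold Rsqr.
  pose proof (pow2_ge_0 (snd p - snd q)). simpl. nra.
Qed.

Lemma Rabs_snd_le_dist2 p q : Rabs (snd p - snd q) <= dist2 p q.
Proof.
  unfold dist2. rewrite <- sqrt_Rsqr_abs. apply sqrt_le_1_alt. unfold Rsqr.
  pose proof (pow2_ge_0 (fst p - fst q)). simpl. nra.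
Qed.

Lemma dist2_le_sum p q : dist2 p q <= Rabs (fst p - fst q) + Rabs (snd p - snd q).
Proof.
  unfold dist2. set (x := fst p - fst q). set (y := snd p - snd q).
  pose proof (Rabs_pos x). pose proof (Rabs_pos y).
  rewrite <- (sqrt_Rsqr (Rabs x + Rabs y)) by lra.
  apply sqrt_le_1_alt. unfold Rsqr. rewrite <- (pow2_abs x), <- (pow2_abs y). nra.
Qed.

Lemma dist2_same_snd p q : snd p = snd q -> dist2 p q = Rabs (fst p - fst q).
Proof.
  intro E. unfold dist2. rewrite E, Rminus_diag, <- sqrt_Rsqr_abs. f_equal. unfold Rsqr. ring.
Qed.

Lemma lipschitz_lt a L d e : 0 < e -> 0 <= d -> a <= L * d -> d < e / (Rabs L + 1) -> a < e.
Proof.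
  intros He Hd Ha Hde. pose proof (Rabs_pos L).
  apply Rmult_lt_compat_r with (r := Rabs L + 1) in Hde; [|lra].
  replace (e / (Rabs L + 1) * (Rabs L + 1)) with e in Hde by (field; lra).
  assert (L * d <= Rabs L * d) by (apply Rmult_le_compat_r; [exact Hd | apply Rle_abs]).
  nra.
Qed.

Lemma lipschitz_delta_pos L e : 0 < e -> 0 < e / (Rabs L + 1).
Proof. intro He. apply Rdiv_lt_0_compat; [exact He | pose proof (Rabs_pos L); lra]. Qed.

Definition open1 (O : R -> Prop) : Prop :=
  forall z, O z -> exists d, 0 < d /\ forall z', Rabs (z' - z) < d -> O z'.

Lemma open1_preimage (f : R -> pt) L (U : pt -> Prop) :
  (forall t t', dist2 (f t) (f t') <= L * Rabs (t - t')) -> open2 U -> open1 (fun t => U (f t)).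
Proof.
  intros Hf HU t Ut. destruct (HU _ Ut) as [d [Hd Hball]].
  exists (d / (Rabs L + 1)). split; [apply lipschitz_delta_pos; exact Hd|].
  intros t' Ht'. apply Hball. apply lipschitz_lt with L (Rabs (t - t')); auto using Rabs_pos.
  rewrite Rabs_minus_sym. exact Ht'.
Qed.

Lemma open2_preimage (f : pt -> R) L (O : R -> Prop) :
  (forall p q, Rabs (f p - f q) <= L * dist2 p q) -> open1 O -> open2 (fun p => O (f p)).
Proof.
  intros Hf HO p Op. destruct (HO _ Op) as [d [Hd Hball]].
  exists (d / (Rabs L + 1)). split; [apply lipschitz_delta_pos; exact Hd|].
  intros q Hq. apply Hball. apply lipschitz_lt with L (dist2 p q); auto.
  - unfold dist2; apply sqrt_pos.
  - rewrite Rabs_minus_sym. apply Hf.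
Qed.

Lemma cont_on_lipschitz (f : pt -> pt) L A :
  (forall p q, dist2 (f p) (f q) <= L * dist2 p q) -> cont_on A f.
Proof.
  intros Hf p _ e He. exists (e / (Rabs L + 1)). split; [apply lipschitz_delta_pos; exact He|].
  intros q _ Hq. apply lipschitz_lt with L (dist2 p q); auto. unfold dist2; apply sqrt_pos.
Qed.

Lemma open1_ball c r : open1 (fun z => Rabs (z - c) < r).
Proof.
  intros z Hz. exists (r - Rabs (z - c)). split; [lra|].
  intros z' Hz'. pose proof (Rdist_tri z' c z). unfold Rdist in *. lra.
Qed.

Lemma open1_ball_compl c r : open1 (fun z => r < Rabs (z - c)).
Proof.
  intros z Hz. exists (Rabs (z - c) - r). split; [lra|].
  intros z' Hz'. pose proof (Rdist_tri z c z'). unfold Rdist in *.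
  rewrite Rabs_minus_sym in Hz'. lra.
Qed.

Lemma unit_interval_connected (U V : R -> Prop) : open1 U -> open1 V ->
  (forall t, 0 <= t <= 1 -> U t \/ V t) -> (forall t, 0 <= t <= 1 -> ~ (U t /\ V t)) ->
  U 0 -> U 1.
Proof.
  intros HU HV Hcov Hdis U0.
  set (E := fun t => 0 <= t <= 1 /\ forall t', 0 <= t' <= t -> U t').
  assert (E0 : E 0) by (split; [lra | intros t' Ht'; replace t' with 0 by lra; exact U0]).
  assert (HE : bound E) by (exists 1; intros t [Ht _]; lra).
  destruct (completeness E HE (ex_intro _ 0 E0)) as [tau [Hub Hlub]].
  assert (Htau : 0 <= tau <= 1) by (split; [apply Hub, E0 | apply Hlub; intros t [Ht _]; lra]).
  assert (below : forall t, 0 <= t < tau -> U t).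
  { intros t Ht. apply NNPP; intro Hn. enough (tau <= t) by lra.
    apply Hlub. intros t' [_ Et']. destruct (Rle_lt_dec t' t) as [h|h]; [exact h|].
    exfalso. apply Hn, Et'. lra. }
  assert (Utau : U tau).
  { destruct (Hcov tau Htau) as [h|Vtau]; [exact h|]. exfalso.
    destruct (Rle_lt_or_eq_dec 0 tau (proj1 Htau)) as [Hpos|Htau0];
      [| subst tau; exact (Hdis 0 Htau (conj U0 Vtau))].
    destruct (HV _ Vtau) as [d [Hd Hball]].
    set (t := Rmax 0 (tau - d / 2)).
    assert (Ht : 0 <= t < tau /\ tau - d / 2 <= t).
    { unfold t. split; [split; [apply Rmax_l | apply Rmax_lub_lt; lra] | apply Rmax_r]. }
    apply (Hdis t); [lra|]. split; [apply below; lra | apply Hball, Rabs_def1; lra]. }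
  destruct (Rle_lt_or_eq_dec tau 1 (proj2 Htau)) as [Hlt|Heq]; [|subst tau; exact Utau].
  exfalso. destruct (HU _ Utau) as [d [Hd Hball]].
  set (t := Rmin 1 (tau + d / 2)).
  assert (Ht : tau < t <= 1 /\ t <= tau + d / 2).
  { unfold t. split; [split; [apply Rmin_glb_lt; lra | apply Rmin_l] | apply Rmin_r]. }
  enough (Et : E t) by (pose proof (Hub t Et); lra).
  split; [lra|]. intros t' Ht'. destruct (Rlt_le_dec t' tau); [apply below; lra|].
  apply Hball, Rabs_def1; lra.
Qed.

Definition seg (p q : pt) (t : R) : pt :=
  (fst p + t * (fst q - fst p), snd p + t * (snd q - snd p)).

Lemma seg_lipschitz p q t t' : dist2 (seg p q t) (seg p q t') <=
  (Rabs (fst q - fst p) + Rabs (snd q - snd p)) * Rabs (t - t').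
Proof.
  eapply Rle_trans; [apply dist2_le_sum|]. unfold seg; simpl.
  replace (_ + t * _ - _) with ((t - t') * (fst q - fst p)) by ring.
  replace (_ + t * _ - _) with ((t - t') * (snd q - snd p)) by ring.
  rewrite !Rabs_mult. lra.
Qed.

Definition convex2 (K : pt -> Prop) : Prop :=
  forall p q, K p -> K q -> forall t, 0 <= t <= 1 -> K (seg p q t).

Lemma convex2_connected K : convex2 K -> connected2 K.
Proof.
  intros HK U V HU HV Hcov Hdis.
  destruct (classic (forall x, K x -> U x)) as [h|h]; [left; exact h|]. right.
  apply not_all_ex_not in h as [p h]. apply imply_to_and in h as [Kp nUp].
  intros b Kb. apply NNPP. intro nVb. apply nUp.
  assert (Ub : U b) by (destruct (Hcov b Kb); tauto).
  assert (Hseg : forall t, 0 <= t <= 1 -> K (seg b p t)) by (intros; apply HK; assumption).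
  replace p with (seg b p 1) by (unfold seg; destruct p; simpl; f_equal; ring).
  apply (unit_interval_connected (fun t => U (seg b p t)) (fun t => V (seg b p t)));
    try (eapply open1_preimage; [apply seg_lipschitz | assumption]).
  - intros t Ht. apply Hcov, Hseg, Ht.
  - intros t Ht [Ut Vt]. exact (Hdis _ (conj (Hseg t Ht) (conj Ut Vt))).
  - cbv beta. replace (seg b p 0) with b by (unfold seg; destruct b; simpl; f_equal; ring).
    exact Ub.
Qed.

Lemma homeomorphic2_ext (A A' B : pt -> Prop) :
  (forall p, A p <-> A' p) -> homeomorphic2 A' B -> homeomorphic2 A B.
Proof.
  intros HA [f [g [Hf [Hg [Hgf [Hfg [Cf Cg]]]]]]].
  exists f, g. repeat split.
  - intros p Ap. apply Hf, HA, Ap.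
  - intros q Bq. apply HA, Hg, Bq.
  - intros p Ap. apply Hgf, HA, Ap.
  - exact Hfg.
  - intros p Ap e He. destruct (Cf p (proj1 (HA p) Ap) e He) as [d [Hd Hball]].
    exists d. split; [exact Hd|]. intros q Aq. apply Hball, HA, Aq.
  - intros q Bq e He. destruct (Cg q Bq e He) as [d [Hd Hball]].
    exists d. split; [exact Hd|]. intros q' Bq'. apply Hball, Bq'.
Qed.

Definition aff (a1 a2 a3 b1 b2 b3 : R) (p : pt) : pt :=
  (a1 * fst p + a2 * snd p + a3, b1 * fst p + b2 * snd p + b3).

Lemma aff_lipschitz a1 a2 a3 b1 b2 b3 p q :
  dist2 (aff a1 a2 a3 b1 b2 b3 p) (aff a1 a2 a3 b1 b2 b3 q) <=
  (Rabs a1 + Rabs a2 + Rabs b1 + Rabs b2) * dist2 p q.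
Proof.
  eapply Rle_trans; [apply dist2_le_sum|]. unfold aff; simpl.
  replace (a1 * fst p + a2 * snd p + a3 - _) with (a1 * (fst p - fst q) + a2 * (snd p - snd q)) by ring.
  replace (b1 * fst p + b2 * snd p + b3 - _) with (b1 * (fst p - fst q) + b2 * (snd p - snd q)) by ring.
  pose proof (Rabs_fst_le_dist2 p q). pose proof (Rabs_snd_le_dist2 p q).
  pose proof (Rabs_triang (a1 * (fst p - fst q)) (a2 * (snd p - snd q))).
  pose proof (Rabs_triang (b1 * (fst p - fst q)) (b2 * (snd p - snd q))).
  rewrite !Rabs_mult in *.
  pose proof (Rabs_pos a1). pose proof (Rabs_pos a2). pose proof (Rabs_pos b1). pose proof (Rabs_pos b2).
  nra.
Qed.

(** * Cuts of the lines of direction (1, s) *)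

Definition lam_x th (m n : Z) : R := IZR m * cos th - IZR n * sin th.
Definition lam_y th (m n : Z) : R := IZR m * sin th + IZR n * cos th.

(* The line through p with direction (1, s) meets the x-axis at (cut s p, 0). *)
Definition cut s (p : pt) : R := fst p - snd p / s.

Definition cuts th eps s (r : R) : Prop := exists m n k : Z,
  0 <= lam_y th m n < eps /\ r = lam_x th m n - IZR k / s.

Definition closure1 (A : R -> Prop) (r : R) : Prop :=
  forall e, 0 < e -> exists a, A a /\ Rabs (r - a) < e.

Section Cut.
Variables th eps s : R.
Hypothesis Hs : s <> 0.

Lemma LambdaLine_cut p : LambdaLine th eps s p <-> cuts th eps s (cut s p).
Proof.
  split.
  - intros [q [t [[m [n [k [Hy ->]]]] ->]]]. exists m, n, k. split; [exact Hy|].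
    unfold cut, lam_x; simpl. field. exact Hs.
  - intros [m [n [k [Hy Hr]]]]. exists (lam_x th m n, IZR k), ((snd p - IZR k) / s).
    split; [exists m, n, k; split; [exact Hy | reflexivity]|].
    destruct p as [p1 p2]. unfold cut in Hr; simpl in *. f_equal; [|field; exact Hs].
    apply Rplus_eq_reg_r with (- (p2 / s)). rewrite Hr at 1. field. exact Hs.
Qed.

Lemma cut_lipschitz p q : Rabs (cut s p - cut s q) <= (1 + / Rabs s) * dist2 p q.
Proof.
  unfold cut. replace (fst p - snd p / s - (fst q - snd q / s))
    with ((fst p - fst q) + (snd p - snd q) * (- / s)) by (field; exact Hs).
  eapply Rle_trans; [apply Rabs_triang|]. rewrite Rabs_mult, Rabs_Ropp, Rabs_inv.
  pose proof (Rabs_fst_le_dist2 p q). pose proof (Rabs_snd_le_dist2 p q).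
  assert (0 < / Rabs s) by (apply Rinv_0_lt_compat, Rabs_pos_lt; exact Hs).
  nra.
Qed.

Lemma closure2_LambdaLine x :
  closure2 (LambdaLine th eps s) x <-> closure1 (cuts th eps s) (cut s x).
Proof.
  split.
  - intros Hx e He. set (L := 1 + / Rabs s).
    destruct (Hx (e / (Rabs L + 1)) (lipschitz_delta_pos L e He)) as [y [Ly Hy]].
    exists (cut s y). split; [apply LambdaLine_cut, Ly|].
    apply lipschitz_lt with L (dist2 x y); auto using cut_lipschitz.
    unfold dist2; apply sqrt_pos.
  - intros Hx e He. destruct (Hx e He) as [a [Aa Ha]].
    exists (fst x - (cut s x - a), snd x). split.
    + apply LambdaLine_cut. unfold cut in *; simpl.
      replace (fst x - (fst x - snd x / s - a) - snd x / s) with a by ring. exact Aa.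
    + rewrite dist2_same_snd by reflexivity. simpl.
      replace (fst x - (fst x - (cut s x - a))) with (cut s x - a) by ring. exact Ha.
Qed.

Lemma dense2_LambdaLine :
  (forall r, closure1 (cuts th eps s) r) -> dense2 (LambdaLine th eps s).
Proof. intros H x. apply closure2_LambdaLine, H. Qed.

End Cut.

Lemma sin_sq_add_cos_sq th : sin th * sin th + cos th * cos th = 1.
Proof. pose proof (sin2_cos2 th) as H. unfold Rsqr in H. exact H. Qed.

Lemma Q2R_Z_ratio (a w : Z) : w <> 0%Z -> exists q : Q, Q2R q = IZR a / IZR w.
Proof.
  intro Hw. exists (Qmake (a * w) (Z.to_pos (w * w))). unfold Q2R; simpl.
  rewrite Z2Pos.id by nia. rewrite !mult_IZR. field. apply not_0_IZR, Hw.
Qed.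

Lemma in_Qspan_Z th s : in_Qspan th s ->
  exists p1 p2 q : Z, q <> 0%Z /\ IZR q * s = IZR p1 * cos th + IZR p2 * sin th.
Proof.
  intros [[a da] [[b db] Hab]]. exists (a * Z.pos db)%Z, (b * Z.pos da)%Z, (Z.pos da * Z.pos db)%Z.
  split; [lia|]. rewrite Hab. unfold Q2R; cbn [Qnum Qden]. rewrite !mult_IZR. field.
  split; apply not_0_IZR; lia.
Qed.

Lemma cos_sin_Z_indep th : ~ (exists q : Q, tan th = Q2R q) -> Z_indep (cos th) (sin th).
Proof.
  intros Htan a b E.
  assert (Hc : cos th <> 0).
  { intro Hc. apply Htan. exists 0%Q. unfold tan, Rdiv. rewrite Hc, Rinv_0. unfold Q2R; simpl. ring. }
  destruct (Z.eq_dec b 0) as [->|Hb].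
  - split; [|reflexivity]. apply eq_IZR. rewrite Rmult_0_l, Rplus_0_r in E.
    apply Rmult_integral in E as [E|E]; [exact E | contradiction].
  - exfalso. apply Htan. destruct (Q2R_Z_ratio (- a) b Hb) as [q Hq]. exists q. rewrite Hq.
    unfold tan. rewrite opp_IZR. apply not_0_IZR in Hb. field_simplify_eq; [lra | split; assumption].
Qed.

Lemma cuts_dense_of_not_Qspan th eps s :
  ~ (exists q : Q, tan th = Q2R q) -> 0 < eps -> s <> 0 -> ~ in_Qspan th s ->
  forall r, closure1 (cuts th eps s) r.
Proof.
  intros Htan Heps Hs Hns r e He.
  set (c := cos th). set (sn := sin th).
  assert (Hind : forall c0 c1 c2 : Z, IZR c0 + IZR c1 * (c / s) + IZR c2 * - (sn / s) = 0 ->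
                   c0 = 0%Z /\ c1 = 0%Z /\ c2 = 0%Z).
  { intros c0 c1 c2 E.
    assert (Es : IZR c0 * s = IZR (- c1) * c + IZR c2 * sn).
    { assert (E' : s * (IZR c0 + IZR c1 * (c / s) + IZR c2 * - (sn / s)) = 0) by (rewrite E; ring).
      replace (s * _) with (IZR c0 * s + IZR c1 * c - IZR c2 * sn) in E' by (field; exact Hs).
      rewrite opp_IZR. lra. }
    destruct (Z.eq_dec c0 0) as [->|Hc0].
    - destruct (cos_sin_Z_indep th Htan (- c1)%Z c2); [rewrite Rmult_0_l in Es; symmetry; exact Es|].
      lia.
    - exfalso. apply Hns.
      destruct (Q2R_Z_ratio (- c1) c0 Hc0) as [a Ha]. destruct (Q2R_Z_ratio c2 c0 Hc0) as [b Hb].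
      exists a, b. rewrite Ha, Hb. apply not_0_IZR in Hc0.
      replace s with ((IZR (- c1) * c + IZR c2 * sn) / IZR c0) by (rewrite <- Es; field; exact Hc0).
      unfold c, sn. field. exact Hc0. }
  set (eta := Rmin e (eps / 2) / 2).
  assert (Heta : 0 < eta /\ eta <= e / 2 /\ eta <= eps / 4).
  { unfold eta. pose proof (Rmin_l e (eps / 2)). pose proof (Rmin_r e (eps / 2)).
    pose proof (Rmin_glb_lt e (eps / 2) 0 He ltac:(lra)). lra. }
  (* aim at the point at cut r and internal coordinate eps/2, rotated by theta *)
  destruct (kronecker2 (c / s) (- (sn / s)) Hind (r * c + eps / 2 * sn) (- r * sn + eps / 2 * c) eta
              (proj1 Heta)) as [m [n [k [H1 H2]]]].
  set (e1 := IZR m - IZR k * (c / s) - (r * c + eps / 2 * sn)) in *.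
  set (e2 := IZR n - IZR k * - (sn / s) - (- r * sn + eps / 2 * c)) in *.
  pose proof (sin_sq_add_cos_sq th) as Hsc. fold c sn in Hsc.
  pose proof (SIN_bound th) as Hsb. pose proof (COS_bound th) as Hcb. fold c sn in Hsb, Hcb.
  exists (lam_x th m n - IZR k / s). split.
  - exists m, n, k. split; [|reflexivity].
    assert (EY : lam_y th m n - eps / 2 = e1 * sn + e2 * c).
    { enough (D : lam_y th m n - eps / 2 - (e1 * sn + e2 * c) = eps / 2 * (sn * sn + c * c - 1))
        by (rewrite Hsc in D; lra).
      unfold lam_y, e1, e2, Rdiv; fold c sn; ring. }
    pose proof (Rabs_comb_le e1 e2 sn c (Rabs_le _ _ Hsb) (Rabs_le _ _ Hcb)) as Hb.
    rewrite <- EY in Hb. assert (HY : Rabs (lam_y th m n - eps / 2) < eps / 2) by lra.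
    apply Rabs_def2 in HY. lra.
  - assert (EX : r - (lam_x th m n - IZR k / s) = - (e1 * c + e2 * - sn)).
    { enough (D : r - (lam_x th m n - IZR k / s) + (e1 * c + e2 * - sn)
                  = (r + IZR k / s) * (1 - (sn * sn + c * c)))
        by (rewrite Hsc in D; lra).
      unfold lam_x, e1, e2, Rdiv; fold c sn; ring. }
    assert (Hsb' : Rabs (- sn) <= 1) by (rewrite Rabs_Ropp; apply Rabs_le, Hsb).
    pose proof (Rabs_comb_le e1 e2 c (- sn) (Rabs_le _ _ Hcb) Hsb') as Hb.
    rewrite EX, Rabs_Ropp. lra.
Qed.

(** * The rational case *)

Section Rational.
Variables th eps s : R.
Hypothesis Htan : ~ exists q : Q, tan th = Q2R q.
Hypothesis Heps : 0 < eps.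
Hypothesis Hs : s <> 0.
Variables p1 p2 q : Z.
Hypothesis Hq : q <> 0%Z.
Hypothesis Hspan : IZR q * s = IZR p1 * cos th + IZR p2 * sin th.

Definition phi (m n k : Z) : Z := (p1 * m - p2 * n - q * k)%Z.
Definition Xv : R := IZR q * s.
Definition Yv : R := IZR p1 * sin th - IZR p2 * cos th.

(* Since q s = p1 cos + p2 sin, the cut of a lattice point is determined by the integer
   phi m n k and its internal coordinate. *)
Lemma cut_identity m n k :
  Xv * (lam_x th m n - IZR k / s) + Yv * lam_y th m n = IZR (phi m n k).
Proof.
  pose proof (sin_sq_add_cos_sq th) as Hsc.
  unfold phi. rewrite !minus_IZR, !mult_IZR.
  transitivity (Xv * lam_x th m n - IZR q * IZR k + Yv * lam_y th m n);
    [unfold Xv; field; exact Hs|].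
  unfold Xv. rewrite Hspan. unfold Yv, lam_x, lam_y.
  transitivity ((IZR p1 * IZR m - IZR p2 * IZR n) * (sin th * sin th + cos th * cos th) - IZR q * IZR k);
    [ring | rewrite Hsc; ring].
Qed.

Lemma Xv_neq0 : Xv <> 0.
Proof. unfold Xv. apply Rmult_integral_contrapositive. split; [apply not_0_IZR, Hq | exact Hs]. Qed.

Lemma Yv_neq0 : Yv <> 0.
Proof.
  intro E. destruct (cos_sin_Z_indep th Htan (- p2)%Z p1) as [H2 H1].
  - unfold Yv in E. rewrite opp_IZR. lra.
  - apply Xv_neq0. unfold Xv. rewrite Hspan. replace p1 with 0%Z by lia.
    replace p2 with 0%Z by lia. simpl. ring.
Qed.

Definition g : Z := Z.gcd (Z.gcd p1 p2) q.

Lemma g_neq0 : g <> 0%Z.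
Proof. intro E. apply Hq, Z.divide_0_l. rewrite <- E. apply Z.gcd_divide_r. Qed.

Lemma phi_in_gZ m n k : exists i, phi m n k = (g * i)%Z.
Proof.
  assert (Hg12 : (g | Z.gcd p1 p2)%Z) by apply Z.gcd_divide_l.
  assert (Hg1 : (g | p1)%Z) by (eapply Z.divide_trans; [exact Hg12 | apply Z.gcd_divide_l]).
  assert (Hg2 : (g | p2)%Z) by (eapply Z.divide_trans; [exact Hg12 | apply Z.gcd_divide_r]).
  assert (Hgq : (g | q)%Z) by apply Z.gcd_divide_r.
  destruct (Z.divide_sub_r g (p1 * m - p2 * n) (q * k)) as [i Hi];
    [apply Z.divide_sub_r; apply Z.divide_mul_l; assumption | apply Z.divide_mul_l, Hgq|].
  exists i. unfold phi. rewrite Hi. ring.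
Qed.

Lemma gZ_in_phi i : exists m n k, phi m n k = (g * i)%Z.
Proof.
  destruct (Z.gcd_bezout (Z.gcd p1 p2) q g eq_refl) as [x [y Hxy]].
  destruct (Z.gcd_bezout p1 p2 (Z.gcd p1 p2) eq_refl) as [x' [y' Hxy']].
  exists (i * x * x')%Z, (- (i * x * y'))%Z, (- (i * y))%Z.
  unfold phi. rewrite <- Hxy, <- Hxy'. ring.
Qed.

Definition u : R := IZR g / Xv.
Definition kap : R := - Yv / Xv.

Definition piece (i : Z) (y : R) : R := u * IZR i + kap * y.

Lemma kap_neq0 : kap <> 0.
Proof. unfold kap, Rdiv. pose proof Xv_neq0. pose proof Yv_neq0.
  apply Rmult_integral_contrapositive. split; [lra | apply Rinv_neq_0_compat; assumption]. Qed.

Lemma u_neq0 : u <> 0.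
Proof. unfold u, Rdiv. pose proof Xv_neq0.
  apply Rmult_integral_contrapositive. split; [apply not_0_IZR, g_neq0 | apply Rinv_neq_0_compat; assumption]. Qed.

Lemma cut_on_piece m n k i :
  phi m n k = (g * i)%Z -> lam_x th m n - IZR k / s = piece i (lam_y th m n).
Proof.
  intro Hi. pose proof Xv_neq0 as HX. apply Rmult_eq_reg_l with Xv; [|exact HX].
  replace (Xv * (lam_x th m n - IZR k / s)) with (IZR (phi m n k) - Yv * lam_y th m n)
    by (rewrite <- cut_identity; ring).
  rewrite Hi, mult_IZR. unfold piece, u, kap. field. exact HX.
Qed.

Lemma cuts_on_pieces a : cuts th eps s a -> exists i y, 0 <= y < eps /\ a = piece i y.
Proof.
  intros [m [n [k [Hy ->]]]]. destruct (phi_in_gZ m n k) as [i Hi].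
  exists i, (lam_y th m n). split; [exact Hy | apply cut_on_piece, Hi].
Qed.

(* Shifting (m, n, k) by (q M, q N, p1 M - p2 N) keeps phi, hence the piece, and moves the
   internal coordinate by the dense Z-span of q sin and q cos. *)
Lemma piece_in_closure i y : 0 <= y <= eps -> closure1 (cuts th eps s) (piece i y).
Proof.
  intros Hy e He. destruct (gZ_in_phi i) as [m0 [n0 [k0 Hphi]]].
  set (S := fun Y => exists M N : Z, Y = lam_y th (m0 + q * M) (n0 + q * N)).
  assert (HS : forall t d, 0 < d -> exists Y, S Y /\ Rabs (Y - t) < d).
  { intros t d Hd.
    assert (Hqi : Z_indep (IZR q * sin th) (IZR q * cos th)).
    { intros a b E.
      assert (E' : IZR q * (IZR b * cos th + IZR a * sin th) = 0) by (rewrite <- E; ring).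
      apply Rmult_integral in E' as [E'|E']; [exfalso; apply Hq, eq_IZR, E'|].
      destruct (cos_sin_Z_indep th Htan b a E'). split; assumption. }
    destruct (Z_span_dense _ _ Hqi (t - lam_y th m0 n0) d Hd) as [M [N HMN]].
    exists (lam_y th (m0 + q * M) (n0 + q * N)). split; [exists M, N; reflexivity|].
    replace (lam_y th (m0 + q * M) (n0 + q * N) - t)
      with (IZR M * (IZR q * sin th) + IZR N * (IZR q * cos th) - (t - lam_y th m0 n0))
      by (unfold lam_y; rewrite !plus_IZR, !mult_IZR; ring).
    exact HMN. }
  destruct (dense_meets_window S eps y (e / (Rabs (Rabs kap) + 1)) HS Heps Hy
              (lipschitz_delta_pos _ e He)) as [Y [[M [N ->]] [HY HYy]]].
  exists (lam_x th (m0 + q * M) (n0 + q * N) - IZR (k0 + p1 * M - p2 * N) / s). split.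
  - exists (m0 + q * M)%Z, (n0 + q * N)%Z, (k0 + p1 * M - p2 * N)%Z. split; [exact HY | reflexivity].
  - rewrite (cut_on_piece _ _ _ i) by (rewrite <- Hphi; unfold phi; ring).
    set (Y := lam_y th (m0 + q * M) (n0 + q * N)) in *.
    replace (piece i y - piece i Y) with (kap * (y - Y)) by (unfold piece; ring).
    rewrite Rabs_mult. apply lipschitz_lt with (Rabs kap) (Rabs (y - Y));
      [exact He | apply Rabs_pos | apply Rle_refl | rewrite Rabs_minus_sym; exact HYy].
Qed.

Lemma pieces_apart i i' y y' : i <> i' ->
  Rabs u - Rabs kap * Rabs (y - y') <= Rabs (piece i y - piece i' y').
Proof.
  intro Hi. replace (piece i y - piece i' y') with (u * IZR (i - i') - - (kap * (y - y')))
    by (unfold piece; rewrite minus_IZR; ring).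
  eapply Rle_trans; [|apply Rabs_triang_inv]. rewrite Rabs_Ropp, !Rabs_mult.
  assert (1 <= Rabs (IZR (i - i'))) by (rewrite <- abs_IZR; apply IZR_le; lia).
  pose proof (Rabs_pos u). nra.
Qed.

Definition gap : R := Rabs u - Rabs kap * eps.

Lemma cuts_dense_of_gap_nonpos : gap <= 0 -> forall z, closure1 (cuts th eps s) z.
Proof.
  intros Hgap z. pose proof kap_neq0 as Hk. pose proof u_neq0 as Hu.
  set (d := u / kap). set (w := z / kap).
  assert (Hd : 0 < Rabs d <= eps).
  { unfold d, Rdiv. rewrite Rabs_mult, Rabs_inv. unfold gap in Hgap.
    assert (0 < Rabs kap) by (apply Rabs_pos_lt, Hk).
    pose proof (Rabs_pos_lt _ Hu).
    split; [apply Rmult_lt_0_compat; [lra | apply Rinv_0_lt_compat; lra]|].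
    apply Rmult_le_reg_r with (Rabs kap); [lra|]. rewrite Rmult_assoc, Rinv_l; lra. }
  destruct (floor_mult (Rabs d) w (proj1 Hd)) as [t Ht].
  assert (Hi : exists i : Z, IZR i * d = IZR t * Rabs d).
  { destruct (Rcase_abs d).
    - exists (- t)%Z. rewrite opp_IZR, Rabs_left by lra. ring.
    - exists t. rewrite Rabs_pos_eq by lra. reflexivity. }
  destruct Hi as [i Hi].
  replace z with (piece i (w - IZR t * Rabs d))
    by (rewrite <- Hi; unfold piece, d, w; field; exact Hk).
  apply piece_in_closure. lra.
Qed.

Lemma closure_on_pieces z : 0 < gap -> closure1 (cuts th eps s) z ->
  exists i y, 0 <= y <= eps /\ z = piece i y.
Proof.
  intros Hgap Hz. pose proof kap_neq0 as Hk.
  assert (Hk' : 0 < Rabs kap) by (apply Rabs_pos_lt, Hk).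
  destruct (Hz (gap / 2)) as [a1 [A1 H1]]; [lra|].
  destruct (cuts_on_pieces a1 A1) as [i [y1 [Hy1 ->]]].
  exists i, ((z - u * IZR i) / kap). split; [|unfold piece; field; exact Hk].
  apply interval_closed. intros d Hd.
  destruct (Hz (Rmin (gap / 2) (Rabs kap * d))) as [a2 [A2 H2]].
  { apply Rmin_glb_lt; [lra | apply Rmult_lt_0_compat; assumption]. }
  destruct (cuts_on_pieces a2 A2) as [i2 [y2 [Hy2 ->]]].
  exists y2. split; [lra|].
  pose proof (Rmin_l (gap / 2) (Rabs kap * d)). pose proof (Rmin_r (gap / 2) (Rabs kap * d)).
  destruct (Z.eq_dec i i2) as [<-|Hne].
  - replace (z - piece i y2) with (kap * ((z - u * IZR i) / kap - y2)) in H2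
      by (unfold piece; field; exact Hk).
    rewrite Rabs_mult in H2. apply Rmult_lt_reg_l with (Rabs kap); [exact Hk' | lra].
  - exfalso. pose proof (pieces_apart i i2 y1 y2 Hne) as Hap.
    assert (Rabs kap * Rabs (y1 - y2) <= Rabs kap * eps)
      by (apply Rmult_le_compat_l; [lra | apply Rabs_le; lra]).
    pose proof (Rdist_tri (piece i y1) (piece i2 y2) z). unfold Rdist in *.
    rewrite Rabs_minus_sym in H1. unfold gap in *. lra.
Qed.

Definition band (i : Z) (p : pt) : Prop := exists y, 0 <= y <= eps /\ cut s p = piece i y.

Lemma band_convex i : convex2 (band i).
Proof.
  intros p p' [y [Hy E]] [y' [Hy' E']] t Ht. exists (y + t * (y' - y)). split; [nra|].
  replace (cut s (seg p p' t)) with (cut s p + t * (cut s p' - cut s p))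
    by (unfold cut, seg; simpl; field; exact Hs).
  rewrite E, E'. unfold piece. ring.
Qed.

Lemma band_in_closure i p : band i p -> closure2 (LambdaLine th eps s) p.
Proof.
  intros [y [Hy E]]. apply closure2_LambdaLine; [exact Hs|]. rewrite E. apply piece_in_closure, Hy.
Qed.

(* A connected subset of the closure meeting band i stays in band i: the ball of radius
   |kap| eps/2 + gap/2 around the middle of piece i separates it from the other pieces. *)
Lemma component_in_band x i p : 0 < gap -> band i x ->
  component2 (closure2 (LambdaLine th eps s)) x p -> band i p.
Proof.
  intros Hgap [y0 [Hy0 Hx]] [K [HK [KC [Kx Kp]]]].
  set (c := piece i (eps / 2)). set (rho := Rabs kap * (eps / 2) + gap / 2).
  set (U := fun w => Rabs (cut s w - c) < rho).
  set (V := fun w => rho < Rabs (cut s w - c)).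
  assert (Hmid : forall y, 0 <= y <= eps -> Rabs kap * Rabs (y - eps / 2) <= Rabs kap * (eps / 2))
    by (intros y Hy; apply Rmult_le_compat_l; [apply Rabs_pos | apply Rabs_le; lra]).
  assert (near : forall y, 0 <= y <= eps -> Rabs (piece i y - c) < rho).
  { intros y Hy. unfold c, piece. replace (_ - _) with (kap * (y - eps / 2)) by ring.
    rewrite Rabs_mult. pose proof (Hmid y Hy). unfold rho. lra. }
  assert (far : forall i' y, i' <> i -> 0 <= y <= eps -> rho < Rabs (piece i' y - c)).
  { intros i' y Hi' Hy. pose proof (pieces_apart i' i y (eps / 2) Hi').
    pose proof (Hmid y Hy). unfold rho, gap, c in *. lra. }
  assert (classify : forall w, K w -> band i w \/ V w).
  { intros w Kw. pose proof (KC w Kw) as Cw. apply closure2_LambdaLine in Cw; [|exact Hs].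
    destruct (closure_on_pieces _ Hgap Cw) as [i' [y [Hy E]]].
    destruct (Z.eq_dec i' i) as [->|Hne].
    - left. exists y. split; assumption.
    - right. unfold V. rewrite E. apply far; assumption. }
  assert (Hopen : forall O, open1 O -> open2 (fun w => O (cut s w)))
    by (intros O HO; exact (open2_preimage (cut s) _ O (cut_lipschitz s Hs) HO)).
  destruct (HK U V (Hopen _ (open1_ball c rho)) (Hopen _ (open1_ball_compl c rho))) as [KU|KV].
  - intros w Kw. destruct (classify w Kw) as [[y [Hy E]]|Vw]; [left | right; exact Vw].
    unfold U. rewrite E. apply near, Hy.
  - intros w [_ [Uw Vw]]. unfold U, V in *. lra.
  - destruct (classify p Kp) as [Hb|Vp]; [exact Hb|].
    exfalso. specialize (KU p Kp). unfold U, V in *. lra.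
  - exfalso. specialize (KV x Kx). unfold V in KV. rewrite Hx in KV.
    specialize (near y0 Hy0). lra.
Qed.

Lemma component_iff_band x i : 0 < gap -> band i x -> forall p,
  component2 (closure2 (LambdaLine th eps s)) x p <-> band i p.
Proof.
  intros Hgap Hx p. split; [apply component_in_band; assumption|].
  intro Hp. exists (band i). repeat split; [apply convex2_connected, band_convex | | exact Hx | exact Hp].
  apply band_in_closure.
Qed.

Lemma band_homeomorphic_strip i : homeomorphic2 (band i) strip.
Proof.
  pose proof kap_neq0 as Hk.
  assert (Hke : kap * eps <> 0) by (apply Rmult_integral_contrapositive; split; lra).
  exists (aff (/ (kap * eps)) (- / (s * kap * eps)) (- (u * IZR i) / (kap * eps)) 0 1 0),
         (aff (kap * eps) (/ s) (u * IZR i) 0 1 0).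
  split; [|split; [|split; [|split; [|split]]]].
  - intros p [y [Hy E]]; unfold strip, aff; simpl.
    replace (/ (kap * eps) * fst p + - / (s * kap * eps) * snd p + - (u * IZR i) / (kap * eps))
      with ((cut s p - u * IZR i) / (kap * eps)) by (unfold cut; field; repeat split; lra || assumption).
    rewrite E. unfold piece. replace (_ / _) with (y / eps) by (field; split; lra).
    assert (Hie : 0 < / eps) by (apply Rinv_0_lt_compat, Heps).
    split; [unfold Rdiv; nra|].
    apply Rmult_le_reg_r with eps; [exact Heps|]. unfold Rdiv. rewrite Rmult_assoc, Rinv_l; lra.
  - intros p Hp. exists (eps * fst p). unfold strip in Hp. split; [nra|].
    unfold cut, aff, piece; simpl. field. exact Hs.
  - intros [a b] _. unfold aff; simpl. f_equal; [field; repeat split; lra || assumption | ring].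
  - intros [a b] _. unfold aff; simpl. f_equal; [field; repeat split; lra || assumption | ring].
  - apply cont_on_lipschitz with (L := Rabs (/ (kap * eps)) + Rabs (- / (s * kap * eps)) + Rabs 0 + Rabs 1).
    intros; apply aff_lipschitz.
  - apply cont_on_lipschitz with (L := Rabs (kap * eps) + Rabs (/ s) + Rabs 0 + Rabs 1).
    intros; apply aff_lipschitz.
Qed.

Lemma rational_case :
  dense2 (LambdaLine th eps s) \/
  (forall x, closure2 (LambdaLine th eps s) x ->
     homeomorphic2 (component2 (closure2 (LambdaLine th eps s)) x) strip).
Proof.
  destruct (Rle_lt_dec gap 0) as [Hgap|Hgap].
  - left. apply dense2_LambdaLine; [exact Hs|]. exact (cuts_dense_of_gap_nonpos Hgap).
  - right. intros x Cx. apply closure2_LambdaLine in Cx; [|exact Hs].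
    destruct (closure_on_pieces _ Hgap Cx) as [i [y [Hy E]]].
    apply homeomorphic2_ext with (band i); [|apply band_homeomorphic_strip].
    apply component_iff_band; [exact Hgap|]. exists y. split; assumption.
Qed.

End Rational.

Theorem theorem1 (theta eps s : R)
  (Htan : ~ exists q : Q, tan theta = Q2R q)
  (Heps : 0 < eps) (Hs : s <> 0) :
  (in_Qspan theta s ->
     dense2 (LambdaLine theta eps s) \/
     (forall x, closure2 (LambdaLine theta eps s) x ->
        homeomorphic2 (component2 (closure2 (LambdaLine theta eps s)) x) strip)) /\
  (~ in_Qspan theta s -> dense2 (LambdaLine theta eps s)).
Proof.
  split.
  - intros Hspan. destruct (in_Qspan_Z theta s Hspan) as [p1 [p2 [q [Hq Hpq]]]].
    exact (rational_case theta eps s Htan Heps Hs p1 p2 q Hq Hpq).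
  - intros Hns. apply dense2_LambdaLine; [exact Hs|].
    exact (cuts_dense_of_not_Qspan theta eps s Htan Heps Hs Hns).
Qed.
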